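(* Let $\hat\alpha\in\{-2,-3,\dots\}$ and let $\mathcal F=(F_1,F_2)$ be a pair of finite sets of positive integers satisfying $\{0,1,\dots,-\hat\alpha-1\}\subset F_1\cup(-\hat\alpha-1-F_2)$, and assume that $\hat c=\hat\alpha+1$ and $\mathcal F$ are admissible (i.e. $\prod_{h\in\mathcal H}(x-h)\ge0$ for all $x\in\mathbb N\setminus F_1$). Then $\hat\alpha+s_{\mathcal F}\ne-1$, and: (1) if $\hat\alpha+s_{\mathcal F}\le-2$, then $\hat c'=\hat\alpha+1+s_{\mathcal F}$ and $\mathcal F_\Downarrow=(F'_1,F'_2)$ satisfy $\{0,1,\dots,-\hat c'\}\subset F'_1\cup(-\hat c'-F'_2)$ and are admissible in the same sense; (2) if $\hat\alpha+s_{\mathcal F}\ge0$, then $d=\hat\alpha+1+s_{\mathcal F}$ and $\mathcal F_\Downarrow=(F'_1,F'_2)$ are admissible in the sense that $\prod_{f\in F'_1}(x-f)\prod_{f\in F'_2}(x+d+f)\Gamma(x+d)\ge0$ for all $x\in\mathbb N$.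
   Context: $\mathbb N=\{0,1,\dots\}$; $t-F=\{t-f:f\in F\}$. For $\hat c\in\{0,-1,\dots\}$ and pair $(F_1,F_2)$: $\mathcal H=[(F_1\cup(-\hat c-F_2))\setminus\{0,\dots,-\hat c\}]\cup[F_1\cap(-\hat c-F_2)]$. For a finite set $F=\{f_1<\dots<f_{n_F}\}$ of positive integers: $s_F=1$ if $F=\emptyset$; $s_F=n_F+1$ if $F=\{1,\dots,n_F\}$; otherwise $s_F=\min\{s\ge1:s<f_s\}$. $F_\Downarrow=\emptyset$ if $F=\emptyset$ or $F=\{1,\dots,n_F\}$; otherwise $F_\Downarrow=\{f_{s_F}-s_F,\dots,f_{n_F}-s_F\}$. For a pair, $s_{\mathcal F}=s_{F_1}$ and $\mathcal F_\Downarrow=((F_1)_\Downarrow,F_2)$. *)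

From mathcomp Require Import all_boot all_order all_algebra.
Set Implicit Arguments. Unset Strict Implicit. Unset Printing Implicit Defensive.
Import Order.TTheory GRing.Theory Num.Theory.
Local Open Scope ring_scope.

(* Finite sets of positive integers are represented by duplicate-free
   sequences of nats (order irrelevant); [sort leq F] is the increasing
   enumeration f_1 < ... < f_n. *)

Definition shiftneg (t : int) (F : seq nat) : seq int := [seq t - f%:Z | f <- F].

(* the set H attached to c and (F1,F2):
   [(F1 ∪ (-c-F2)) \ {0,..,-c}] ∪ [F1 ∩ (-c-F2)]  (a set: duplicates removed) *)
Definition Hset (c : int) (F1 F2 : seq nat) : seq int :=
  let A := [seq f%:Z | f <- F1] in
  let B := shiftneg (- c) F2 in
  undup [seq h <- A ++ B |
          ((h \in A) || (h \in B)) && ~~ ((0 <= h) && (h <= - c))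
          || ((h \in A) && (h \in B))].

Definition covers (c : int) (F1 F2 : seq nat) : Prop :=
  forall k : int, 0 <= k <= - c ->
    (k \in [seq f%:Z | f <- F1]) || (k \in shiftneg (- c) F2).

Definition admissible (c : int) (F1 F2 : seq nat) : Prop :=
  forall x : nat, x \notin F1 -> 0 <= \prod_(h <- Hset c F1 F2) (x%:Z - h).

Definition sF (F : seq nat) : nat :=
  let srt := sort leq F in
  let n := size srt in
  if srt == iota 1 n then n.+1
  else (find (fun i => i.+1 < nth 0 srt i)%N (iota 0 n)).+1.

Definition Fdown (F : seq nat) : seq nat :=
  let srt := sort leq F in
  let n := size srt in
  if srt == iota 1 n then [::]
  else [seq (f - sF F)%N | f <- drop (sF F).-1 srt].

(* Euler's Gamma function at a positive integer n: Γ(n) = (n-1)!.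
   Only used at positive integer arguments. *)
Definition Gamma_posint (n : nat) : int := ((n.-1)`!)%:Z.

From mathcomp Require Import all_boot all_order all_algebra zify.
Import Order.TTheory GRing.Theory Num.Theory.

(* Put c = alpha + 1, m = -c >= 1 and s = s_{F1}.
   1. Combinatorics of s_F (lemma sF_split): a finite set F of positive
      integers splits as {1,...,s-1} ⊔ D with every element of D larger
      than s, and F⇓ = D - s.  Hence 1,...,s-1 ∈ F, s ∉ F and
      f ∈ F⇓ <-> f + s ∈ F.
   2. s <> m, since otherwise covering {0,...,m} at s forces 0 ∈ F2.
   3. If s < m, the covering for c + s is the covering for c shifted by -s
      (covers_down), and the new set H' equals (H ∪ {0}) - s (Hset_down);
      so for x ∉ F1⇓ the product over H' is (x+s) ∏_H (x+s-h) >= 0, by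
      admissibility of c at x + s ∉ F1 (admissible_down).
   4. If s > m, the elements of H that are >= s are exactly F1⇓ + s
      (Hset_above), and the remaining ones give positive factors at x + s;
      admissibility at x + s then yields ∏_{F1⇓}(x - f) >= 0
      (prod_Fdown_ge0). *)

Lemma sorted_pos_nth_gt {t : seq nat} :
  sorted ltn t -> 0 \notin t -> forall i, i < size t -> i < nth 0 t i.
Proof.
move=> st t0; elim=> [|i IH] lt_it.
  by rewrite lt0n; apply: contra t0 => /eqP <-; rewrite mem_nth.
have := sorted_ltn_nth ltn_trans 0 st i i.+1 (ltnW lt_it) lt_it (ltnSn i).
by have := IH (ltnW lt_it); lia.
Qed.

Lemma sorted_drop_ge {t : seq nat} {j g : nat} :
  sorted ltn t -> g \in drop j t -> nth 0 t j <= g.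
Proof.
move=> st /(nthP 0) [i]; rewrite size_drop nth_drop => lt_i <-.
case: i lt_i => [|i] lt_i; first by rewrite addn0.
have {}lt_i : j + i.+1 < size t by rewrite -ltn_subRL.
by apply/ltnW/(sorted_ltn_nth ltn_trans) => //; rewrite ?inE /=; lia.
Qed.

Lemma first_gap {t : seq nat} :
  sorted ltn t -> 0 \notin t -> t != iota 1 (size t) ->
  let j := find (fun i => i.+1 < nth 0 t i) (iota 0 (size t)) in
  [/\ j < size t, take j t = iota 1 j & j.+1 < nth 0 t j].
Proof.
move=> st t0 t_neq j.
have gt_nth := sorted_pos_nth_gt st t0.
have lt_j : j < size t.
  rewrite -[X in _ < X](size_iota 0) -has_find; apply/negPn/negP => /hasPn nogap.
  move/negP: t_neq; apply; apply/eqP/(@eq_from_nth _ 0); first by rewrite size_iota.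
  move=> i lt_i; rewrite nth_iota //.
  by have := nogap i; rewrite mem_iota => /(_ lt_i); have := gt_nth i lt_i; lia.
split=> //.
  apply: (@eq_from_nth _ 0); first by rewrite size_iota size_takel // ltnW.
  move=> i; rewrite size_takel ?(ltnW lt_j) // => lt_ij.
  rewrite nth_take // nth_iota //.
  have := before_find 0 lt_ij; rewrite nth_iota ?size_iota ?(ltn_trans lt_ij) //.
  by rewrite add0n => /negbT; rewrite -leqNgt; have := gt_nth i (ltn_trans lt_ij lt_j); lia.
have := @nth_find _ 0 (fun i => i.+1 < nth 0 t i) (iota 0 (size t)).
by rewrite has_find size_iota -/j => /(_ lt_j); rewrite nth_iota.
Qed.

Lemma sF_split {F : seq nat} : uniq F -> all (fun f => 0 < f) F ->
  exists D : seq nat,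
    [/\ F =i iota 1 (sF F).-1 ++ D, all (fun f => sF F < f) D, uniq D
      & Fdown F = [seq f - sF F | f <- D]].
Proof.
move=> uF pF.
have st : sorted ltn (sort leq F).
  by rewrite ltn_sorted_uniq_leq sort_uniq uF sort_sorted //; exact: leq_total.
have t0 : 0 \notin sort leq F by rewrite mem_sort; apply/negP => /(allP pF).
rewrite /Fdown /sF; case: ifPn => [/eqP t_eq | t_neq].
  by exists [::]; split=> // x; rewrite cats0 /= -t_eq mem_sort.
have [lt_j take_j gap_j] := first_gap st t0 t_neq.
set j := find _ _ in lt_j take_j gap_j *.
exists (drop j (sort leq F)); split=> //.
- by move=> x; rewrite -take_j cat_take_drop mem_sort.
- by apply/allP => g /(sorted_drop_ge st); exact: leq_trans gap_j.
- by rewrite drop_uniq // sort_uniq.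
Qed.

Lemma sF_gt0 (F : seq nat) : 0 < sF F.
Proof. by rewrite /sF; case: ifP. Qed.

Section GapStructure.

Context {F : seq nat}.
Hypotheses (uF : uniq F) (pF : all (fun f => 0 < f) F).

Lemma mem_lt_sF k : 0 < k < sF F -> k \in F.
Proof.
have [D [memF _ _ _]] := sF_split uF pF; have := sF_gt0.
by move=> s_gt0 k_bd; rewrite memF mem_cat mem_iota; apply/orP; left; lia.
Qed.

Lemma sF_notin : sF F \notin F.
Proof.
have [D [memF bigD _ _]] := sF_split uF pF; have := sF_gt0.
rewrite memF mem_cat mem_iota negb_or => s_gt0; apply/andP; split; first lia.
by apply/negP => /(allP bigD); rewrite ltnn.
Qed.

Lemma mem_Fdown f : (f \in Fdown F) = (f + sF F \in F).
Proof.
have [D [memF bigD _ ->]] := sF_split uF pF; have := sF_gt0.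
move=> s_gt0; rewrite memF mem_cat mem_iota.
have -> : (1 <= f + sF F < 1 + (sF F).-1) = false by lia.
apply/mapP/idP => [[g gD ->]|fsD]; last by exists (f + sF F); rewrite ?addnK.
by rewrite subnK // ltnW // (allP bigD).
Qed.

Lemma Fdown_uniq : uniq (Fdown F).
Proof.
have [D [_ bigD uD ->]] := sF_split uF pF.
by rewrite map_inj_in_uniq // => a b /(allP bigD) ? /(allP bigD) ?; lia.
Qed.

End GapStructure.

Local Open Scope ring_scope.

Definition inZ (F : seq nat) (h : int) : bool := (0 <= h) && (absz h \in F).

Lemma inZ_nat (F : seq nat) (n : nat) : inZ F n%:Z = (n \in F).
Proof. by []. Qed.

Lemma inZ_neg (F : seq nat) (h : int) : h < 0 -> inZ F h = false.
Proof. by rewrite /inZ => h_lt0; rewrite leNgt h_lt0. Qed.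

Lemma inZ0 (F : seq nat) : all (fun f => (0 < f)%N) F -> inZ F 0 = false.
Proof. by move=> pF; rewrite inZ_nat; apply/negP => /(allP pF). Qed.

Lemma memZ (F : seq nat) (h : int) : (h \in [seq f%:Z | f <- F]) = inZ F h.
Proof.
apply/mapP/andP => [[f fF ->]|[h_ge0 hF]]; first by split.
by exists (absz h) => //; lia.
Qed.

Lemma memS (t : int) (F : seq nat) (h : int) :
  (h \in shiftneg t F) = inZ F (t - h).
Proof.
apply/mapP/andP => [[f fF ->]|[h_ge0 hF]]; first by rewrite opprB addrC subrK.
by exists (absz (t - h)) => //; lia.
Qed.

Lemma mem_mapB (t a : int) (L : seq int) :
  (a \in [seq h - t | h <- L]) = (a + t \in L).
Proof.
apply/mapP/idP => [[h hL ->]|atL]; first by rewrite subrK.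
by exists (a + t); rewrite ?addrK.
Qed.

Lemma mem_mapD (t a : int) (L : seq nat) :
  (a \in [seq f%:Z + t | f <- L]) = inZ L (a - t).
Proof.
apply/mapP/andP => [[f fL ->]|[h_ge0 hL]]; first by rewrite addrK.
by exists (absz (a - t)) => //; lia.
Qed.

Lemma memH (c : int) (F1 F2 : seq nat) (h : int) :
  (h \in Hset c F1 F2) =
  if 0 <= h <= - c then inZ F1 h && inZ F2 (- c - h)
  else inZ F1 h || inZ F2 (- c - h).
Proof.
rewrite /Hset mem_undup mem_filter mem_cat memZ memS.
by case: (inZ F1 h); case: (inZ F2 _); case: ifP.
Qed.

Lemma covers_inZ {c : int} {F1 F2 : seq nat} : covers c F1 F2 ->
  forall k : int, 0 <= k <= - c -> inZ F1 k || inZ F2 (- c - k).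
Proof. by move=> cov k /cov; rewrite memZ memS. Qed.

Ltac eval_cmp := repeat match goal with
 | |- context [ (?a <= ?b)%R ] =>
     first [ rewrite (_ : (a <= b)%R = true); last by apply/idP; lia
           | rewrite (_ : (a <= b)%R = false); last by apply/negbTE/negP; lia ]
 | |- context [ (?a < ?b)%R ] =>
     first [ rewrite (_ : (a < b)%R = true); last by apply/idP; lia
           | rewrite (_ : (a < b)%R = false); last by apply/negbTE/negP; lia ]
 | |- context [ (?a == ?b) ] =>
     first [ rewrite (_ : (a == b) = true); last by apply/idP; lia
           | rewrite (_ : (a == b) = false); last by apply/negbTE/negP; lia ]
 end.

Section Descent.

Context {F1 F2 : seq nat}.
Hypotheses (uF1 : uniq F1) (pF1 : all (fun f => (0 < f)%N) F1).
Local Notation s := (sF F1).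

Lemma inZ_sF : inZ F1 s%:Z = false.
Proof. by rewrite inZ_nat (negbTE (sF_notin uF1 pF1)). Qed.

Lemma inZ_lt_sF (x : int) : x < s%:Z -> inZ F1 x = (0 < x).
Proof.
move=> x_lt; case: (ltgtP x 0) => [x_lt0|x_gt0|->]; last exact: inZ0.
  by rewrite inZ_neg.
by rewrite /inZ ltW //=; apply: (mem_lt_sF uF1 pF1); lia.
Qed.

Lemma inZ_Fdown (x : int) : inZ (Fdown F1) (x - s%:Z) = (s%:Z < x) && inZ F1 x.
Proof.
case: (ltgtP x s%:Z) => [x_lt|x_gt|->].
- by rewrite inZ_neg // subr_lt0.
- rewrite /inZ (mem_Fdown uF1 pF1) subr_ge0 ltW //=.
  by rewrite (_ : (absz (x - s%:Z) + s)%N = absz x) //; lia.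
rewrite subrr inZ_sF andbF /inZ /= (mem_Fdown uF1 pF1) add0n.
exact: negbTE (sF_notin uF1 pF1).
Qed.

(* s differs from -c: otherwise covering {0,...,-c} at s forces 0 ∈ F2. *)
Lemma sF_neq_top {c : int} : all (fun f => (0 < f)%N) F2 ->
  covers c F1 F2 -> s%:Z != - c.
Proof.
move=> pF2 cov; apply/eqP => s_top.
have := covers_inZ cov s%:Z; rewrite inZ_sF s_top subrr inZ0 //= lexx andbT.
by rewrite -s_top => /(_ isT).
Qed.

Section BelowTop.

Context {c : int}.
Hypotheses (s_lt : s%:Z < - c) (cov : covers c F1 F2).

(* Shifting the covering of {s,...,-c} down by s covers {0,...,-c-s};
   at 0 this uses s ∉ F1. *)
Lemma covers_down : covers (c + s%:Z) (Fdown F1) F2.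
Proof.
move=> k k_bd; rewrite memZ memS -[k in inZ (Fdown F1) k](addrK s%:Z) inZ_Fdown.
rewrite (_ : - (c + s%:Z) - k = - c - (k + s%:Z)); last lia.
have := covers_inZ cov (k + s%:Z); rewrite ltrDr.
have [->|k_gt0] : k = 0 \/ 0 < k by lia.
  by rewrite add0r inZ_sF ltxx /=; apply; lia.
by rewrite k_gt0 /=; apply; lia.
Qed.

Lemma Hset_down :
  perm_eq (Hset (c + s%:Z) (Fdown F1) F2) [seq h - s%:Z | h <- 0 :: Hset c F1 F2].
Proof.
have s_gt0 := sF_gt0 F1.
have top_F2 : inZ F2 (- c).
  by have := covers_inZ cov 0; rewrite inZ0 // subr0; apply; lia.
apply: uniq_perm; first exact: undup_uniq.
  rewrite map_inj_uniq /=; last exact: addIr.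
  by rewrite undup_uniq andbT memH inZ0 //; eval_cmp.
move=> h; rewrite mem_mapB in_cons !memH.
set x := h + s%:Z; rewrite (_ : h = x - s%:Z); last by rewrite /x addrK.
rewrite inZ_Fdown (_ : - (c + s%:Z) - (x - s%:Z) = - c - x); last lia.
have [x_lt0|[x_eq0|[x_low|[x_mid|x_gt]]]] :
    x < 0 \/ x = 0 \/ (0 < x < s%:Z) \/ (s%:Z <= x <= - c) \/ (- c < x) by lia.
- by rewrite inZ_neg //; eval_cmp.
- by rewrite x_eq0 subr0 top_F2; eval_cmp; rewrite andbT.
- by rewrite inZ_lt_sF; eval_cmp.
- have [->|x_gts] : x = s%:Z \/ s%:Z < x by lia.
    by rewrite inZ_sF; eval_cmp.
  by eval_cmp.
- by rewrite (inZ_neg F2) ?subr_lt0 //; eval_cmp; rewrite !orbF.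
Qed.

(* For x ∉ F1⇓, the H'-product at x is (x + s) times the H-product at
   x + s ∉ F1, hence nonnegative. *)
Lemma admissible_down : admissible c F1 F2 -> admissible (c + s%:Z) (Fdown F1) F2.
Proof.
move=> adm y y_notin; rewrite (perm_big _ Hset_down) big_map big_cons.
have shift (h : int) : y%:Z - (h - s%:Z) = (y + s)%N%:Z - h by lia.
rewrite shift subr0 (eq_bigr _ (fun h _ => shift h)).
by apply: mulr_ge0 => //; apply: adm; rewrite -(mem_Fdown uF1 pF1).
Qed.

End BelowTop.

Section AboveTop.

Context {c : int}.
Hypothesis s_gt : - c < s%:Z.

(* Above the window, H consists of F1 alone; its part >= s is F1⇓ + s. *)
Lemma Hset_above :
  perm_eq [seq h <- Hset c F1 F2 | s%:Z <= h] [seq f%:Z + s%:Z | f <- Fdown F1].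
Proof.
apply: uniq_perm; first by rewrite filter_uniq // undup_uniq.
  by rewrite map_inj_uniq ?(Fdown_uniq uF1 pF1) // => u v /addIr [].
move=> h; rewrite mem_filter mem_mapD inZ_Fdown memH.
have [h_lt|h_ge] := ltP h s%:Z; first by eval_cmp.
rewrite (inZ_neg F2) ?subr_lt0; last lia.
have [->|h_gt] : h = s%:Z \/ s%:Z < h by lia.
  by rewrite inZ_sF; eval_cmp.
by eval_cmp; rewrite orbF.
Qed.

(* For x ∉ F1⇓, the H-product at x + s splits into the F1⇓-product at x
   and positive factors from h < s; for x ∈ F1⇓ the product vanishes. *)
Lemma prod_Fdown_ge0 : admissible c F1 F2 ->
  forall y : nat, 0 <= \prod_(f <- Fdown F1) (y%:Z - f%:Z).
Proof.
move=> adm y; have [y_in|y_notin] := boolP (y \in Fdown F1).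
  by rewrite (big_rem y y_in) /= subrr mul0r.
have := adm (y + s)%N; rewrite -(mem_Fdown uF1 pF1) => /(_ y_notin).
rewrite (bigID (fun h => s%:Z <= h)) /= pmulr_lge0; last first.
  by apply: prodr_gt0 => h; rewrite -ltNge; lia.
rewrite -big_filter (perm_big _ Hset_above) big_map.
by rewrite (eq_bigr (fun f => y%:Z - f%:Z)) // => f _; lia.
Qed.

End AboveTop.

End Descent.

Theorem mainTheorem13 (alpha : int) (F1 F2 : seq nat) :
  alpha <= -2 ->
  uniq F1 -> uniq F2 ->
  all (fun f => 0 < f)%N F1 -> all (fun f => 0 < f)%N F2 ->
  (forall k : int, 0 <= k <= - alpha - 1 ->
     (k \in [seq f%:Z | f <- F1]) || (k \in shiftneg (- alpha - 1) F2)) ->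
  admissible (alpha + 1) F1 F2 ->
  alpha + (sF F1)%:Z != -1 /\
  (alpha + (sF F1)%:Z <= -2 ->
     covers (alpha + 1 + (sF F1)%:Z) (Fdown F1) F2 /\
     admissible (alpha + 1 + (sF F1)%:Z) (Fdown F1) F2) /\
  (0 <= alpha + (sF F1)%:Z ->
     forall x : nat,
       0 <= (\prod_(f <- Fdown F1) (x%:Z - f%:Z))
            * (\prod_(f <- F2) (x%:Z + (alpha + 1 + (sF F1)%:Z) + f%:Z))
            * Gamma_posint (absz (x%:Z + (alpha + 1 + (sF F1)%:Z)))).
Proof.
move=> _ uF1 _ pF1 pF2 cov0 adm.
have cov : covers (alpha + 1) F1 F2 by move=> k; rewrite opprD; exact: cov0.
have s_neq := sF_neq_top uF1 pF1 pF2 cov.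
split; first by apply: contra s_neq => /eqP s_eq; apply/eqP; lia.
split=> [s_lt | s_ge x].
  have s_lt' : (sF F1)%:Z < - (alpha + 1) by lia.
  by split; [exact: covers_down | exact: admissible_down].
have s_gt : - (alpha + 1) < (sF F1)%:Z by lia.
have d_ge0 : 0 <= alpha + 1 + (sF F1)%:Z by lia.
apply: mulr_ge0 => //; apply: mulr_ge0; first exact: (prod_Fdown_ge0 uF1 pF1 s_gt adm).
by apply: prodr_ge0 => f _; apply: addr_ge0 => //; apply: addr_ge0.
Qed.
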